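(* For $n\ge 2$ and $k\ge 3$, \[a_{n,k}(213) = \sum_{j=2}^{n} b_{j,k}(213)\,a_{n+1-j,k}(213),\] where $a_{n,k}(213)$ is the number of cyclic permutations $\pi\in\mathfrak S_n$ whose one-line notation avoids $\delta_k=k(k-1)\cdots21$ and whose cycle form $C(\pi)$ avoids $213$, and $b_{n,k}(213)$ is the number of such permutations that additionally satisfy $\pi_1=n$.
   Context: A permutation $\pi\in\mathfrak S_n$ is cyclic if it consists of a single $n$-cycle. For cyclic $\pi$, $C(\pi)=(1,c_2,\dots,c_n)$ with $c_2=\pi(1)$, $c_{i+1}=\pi(c_i)$, viewed as the sequence $1c_2\cdots c_n$ for pattern avoidance. A sequence avoids a pattern $\sigma\in\mathfrak S_m$ if no subsequence of length $m$ is in the same relative order as $\sigma$. The one-line notation of $\pi$ is $\pi_1\cdots\pi_n$, $\pi_i=\pi(i)$. *)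

From mathcomp Require Import all_boot all_fingroup.
Set Implicit Arguments. Unset Strict Implicit. Unset Printing Implicit Defensive.

(* Conventions: permutations of {1..n} are modelled as 'S_n = {perm 'I_n},
   with value i+1 represented by i (0-indexed). Pattern avoidance only
   depends on relative order, so the shift is harmless. *)

Definition same_order (s t : seq nat) : bool :=
  (size s == size t) &&
  [forall i : 'I_(size s), forall j : 'I_(size s),
     (nth 0 s i < nth 0 s j) == (nth 0 t i < nth 0 t j)].

Definition contains (p s : seq nat) : bool :=
  [exists m : (size s).-tuple bool, same_order (mask m s) p].

Definition avoids (p s : seq nat) : bool := ~~ contains p s.

Definition one_line n (s : 'S_n) : seq nat := [seq val (s i) | i <- enum 'I_n].

Definition cyclic_perm n (s : 'S_n) : bool :=
  [forall x : 'I_n, #|porbit s x| == n].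

(* cycle form C(pi) = (1, pi(1), pi^2(1), ..., ) of length n, starting at 1 (= 0 here) *)
Definition cycle_form n (s : 'S_n) : seq nat :=
  match n return 'S_n -> seq nat with
  | 0 => fun _ => [::]
  | m.+1 => fun s => [seq val x | x <- traject s (ord0 : 'I_m.+1) m.+1]
  end s.

Definition delta (k : nat) : seq nat := rev (iota 0 k).

Definition pat213 : seq nat := [:: 1; 0; 2].

Definition good n k (s : 'S_n) : bool :=
  [&& cyclic_perm s, avoids (delta k) (one_line s) & avoids pat213 (cycle_form s)].

Definition a_nk (n k : nat) : nat := #|[set s : 'S_n | good k s]|.

Definition b_nk (n k : nat) : nat :=
  #|[set s : 'S_n | good k s &&
       (match n return 'S_n -> bool with
        | 0 => fun _ => false
        | m.+1 => fun s => val (s ord0) == m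
        end s)]|.

From mathcomp Require Import all_boot all_fingroup zify.
Set Implicit Arguments. Unset Strict Implicit. Unset Printing Implicit Defensive.

(* A cyclic permutation pi of {0, ..., n-1} is determined by its cycle form
   c = (0, pi(0), pi^2(0), ...): pi(x) is the successor of x in c, read cyclically.
   If c = (0, m, r) avoids 213, then every entry of r above m precedes every entry
   below m, so c = (0, m, B, S) with S < m < B.  Such cycle forms are exactly the
   gluings of the cycle form (0, m, S) of a cyclic sigma on {0, ..., m} with
   sigma(0) = m and the cycle form (0, B - m) of a cyclic tau on {0, ..., n-m-1}.
   In one-line notation pi is sigma on {0, ..., m-1} followed by tau shifted up by m,
   with the shifted value 0 replaced by sigma(m); hence pi avoids delta_k iff sigma
   and tau do, and C(pi) avoids 213 iff C(sigma) and C(tau) do.  Counting the cyclic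
   pi by m = pi(0) gives the recurrence, with j = m + 1. *)

Definition decreasing (t : seq nat) : bool := sorted (fun a b => b < a) t.

Definition has_decreasing k (s : seq nat) : Prop :=
  exists t, [/\ subseq t s, size t = k & decreasing t].

Definition has213 (s : seq nat) : Prop :=
  exists x y z, subseq [:: x; y; z] s /\ y < x < z.

Lemma containsP p s : reflect (exists2 t, subseq t s & same_order t p) (contains p s).
Proof.
apply: (iffP existsP) => [[m so_p] | [t /subseqP [m sz_m ->] so_p]].
  by exists (mask m s); rewrite ?mask_subseq.
by exists (Tuple (introT eqP sz_m)).
Qed.

Lemma same_order_delta k t : same_order t (delta k) = (size t == k) && decreasing t.
Proof.
have size_delta : size (delta k) = k by rewrite size_rev size_iota.
have nth_delta i : i < k -> nth 0 (delta k) i = k - i.+1.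
  by move=> lt_ik; rewrite nth_rev size_iota // nth_iota //; lia.
rewrite /same_order size_delta /decreasing sorted_pairwise; last exact/rev_trans/ltn_trans.
case: eqP => [sz_t | //] /=; apply/forallP/(pairwiseP 0) => [so i j | dec i].
- rewrite !inE => lt_i lt_j lt_ij; have /forallP/(_ (Ordinal lt_i)) := so (Ordinal lt_j).
  by rewrite /= !nth_delta -?sz_t // => /eqP ->; lia.
- apply/forallP => j; rewrite !nth_delta -?sz_t //.
  have lt_i := ltn_ord i; have lt_j := ltn_ord j.
  case: (ltngtP i j) => [lt_ij | lt_ji | /val_inj ->]; last by rewrite !ltnn.
  + by have := dec i j lt_i lt_j lt_ij => /= lt_t; apply/eqP; lia.
  + by have := dec j i lt_j lt_i lt_ji => /= lt_t; apply/eqP; lia.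
Qed.

Lemma same_order_213 t :
  same_order t pat213 <-> exists x y z, t = [:: x; y; z] /\ y < x < z.
Proof.
split => [|[x [y [z [-> lt_xyz]]]]].
  case: t => [|x [|y [|z [|? ?]]]] //= /andP [_ /forallP so]; exists x, y, z; split=> //.
  have /forallP/(_ (@Ordinal 3 1 isT))/eqP := so (@Ordinal 3 0 isT).
  have /forallP/(_ (@Ordinal 3 2 isT))/eqP := so (@Ordinal 3 0 isT).
  have /forallP/(_ (@Ordinal 3 0 isT))/eqP := so (@Ordinal 3 1 isT).
  rewrite /=; lia.
apply/andP; split => //; apply/forallP => -[[|[|[|i]]] lt_i] //;
  apply/forallP => -[[|[|[|j]]] lt_j] //=; apply/eqP; lia.
Qed.

Lemma contains_deltaE k s : contains (delta k) s <-> has_decreasing k s.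
Proof.
split => [/containsP [t sub_t] | [t [sub_t sz_t dec_t]]].
  by rewrite same_order_delta => /andP [/eqP]; exists t.
by apply/containsP; exists t; rewrite // same_order_delta sz_t eqxx.
Qed.

Lemma contains213E s : contains pat213 s <-> has213 s.
Proof.
split => [/containsP [t sub_t /same_order_213 [x [y [z [def_t lt_xyz]]]]] |
          [x [y [z [sub_s lt_xyz]]]]].
  by exists x, y, z; rewrite -def_t.
by apply/containsP; exists [:: x; y; z]; last by apply/same_order_213; exists x, y, z.
Qed.

Lemma subseq_cat_split (T : eqType) (t s1 s2 : seq T) : subseq t (s1 ++ s2) ->
  exists t1 t2, [/\ t = t1 ++ t2, subseq t1 s1 & subseq t2 s2].
Proof.
move=> /subseqP [m sz_m ->].
have sz_m1 : size (take (size s1) m) = size s1.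
  by rewrite size_takel // sz_m size_cat leq_addr.
exists (mask (take (size s1) m) s1), (mask (drop (size s1) m) s2).
by rewrite -mask_cat // cat_take_drop !mask_subseq.
Qed.

Lemma subseq_map_preim (T1 T2 : eqType) (f : T1 -> T2) t s :
  subseq t (map f s) -> exists2 t', t = map f t' & subseq t' s.
Proof. by move=> /subseqP [m sz_m ->]; exists (mask m s); rewrite ?map_mask ?mask_subseq. Qed.

Lemma decreasing_map f t : {mono f : x y / x < y} -> decreasing (map f t) = decreasing t.
Proof. by move=> mono_f; rewrite /decreasing sorted_map; apply: eq_sorted => x y /=. Qed.

Lemma decreasing_cons_gt a t w : decreasing (a :: t) -> w \in t -> w < a.
Proof. by move=> /(order_path_min (rev_trans ltn_trans)) /allP; apply. Qed.

(* Value of the glued permutation at m + y, given v = sigma(m) and x = tau(y). *)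
Definition glue_shift m v x := if x == 0 then v else m + x.

Lemma glue_shift_mono m v : v <= m -> {mono glue_shift m v : x y / x < y}.
Proof. by move=> le_vm x y; rewrite /glue_shift; do 2 case: eqP; lia. Qed.

(* A decreasing subsequence that meets A can use only the entry v of the second
   part, since all its other entries exceed m. *)
Lemma has_decreasing_glue k m v A T : all (fun x => x <= m) A -> v <= m -> 0 \in T ->
  has_decreasing k (A ++ map (glue_shift m v) T) <->
  has_decreasing k (rcons A v) \/ has_decreasing k T.
Proof.
move=> /allP le_A le_vm T0; have Tv : v \in map (glue_shift m v) T.
  by apply/mapP; exists 0; rewrite /glue_shift ?eqxx.
split => [[t [sub_t sz_t dec_t]] | [[t [sub_t sz_t dec_t]] | [t [sub_t sz_t dec_t]]]].
- have [t1 [t2 [def_t sub1 /subseq_map_preim [t2' def_t2 sub2]]]] := subseq_cat_split sub_t.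
  case: t1 def_t sub1 => [|a t1] def_t sub1; rewrite {}def_t /= in sz_t dec_t.
    right; exists t2'; rewrite def_t2 size_map decreasing_map in sz_t dec_t => //.
    exact: glue_shift_mono.
  left; exists (a :: t1 ++ t2); split => //; rewrite -cats1 -cat_cons.
  have t2_v w : w \in t2 -> w = v.
    have le_a : a <= m by apply/le_A/(mem_subseq sub1)/mem_head.
    move=> t2w; have : w < a by apply: decreasing_cons_gt dec_t _; rewrite mem_cat t2w orbT.
    move: t2w; rewrite def_t2 => /mapP [u _ ->]; rewrite /glue_shift.
    by case: eqP => // _; lia.
  have [_ dec_t2] := cat_sorted2 (path_sorted dec_t).
  apply: cat_subseq sub1 _; case: t2 {def_t2 sz_t dec_t} t2_v dec_t2 => [|w [|w' t2]] t2_v //=.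
    by rewrite (t2_v w) ?mem_head /= ?eqxx.
  by rewrite (t2_v w) ?mem_head // (t2_v w') ?inE ?eqxx ?orbT // ltnn.
- exists t; split => //; move: sub_t; rewrite -cats1 => /subseq_cat_split [t1 [t2 [-> sub1 sub2]]].
  apply: cat_subseq sub1 (subseq_trans sub2 _).
  by rewrite sub1seq.
- exists (map (glue_shift m v) t); split.
  + exact/(subseq_trans _ (suffix_subseq _ _))/map_subseq.
  + by rewrite size_map.
  + by rewrite decreasing_map //; exact: glue_shift_mono.
Qed.

Lemma has213_subseq s1 s2 : subseq s1 s2 -> has213 s1 -> has213 s2.
Proof. by move=> sub12 [x [y [z [sub1 lt_xyz]]]]; exists x, y, z; rewrite (subseq_trans sub1). Qed.

Lemma has213_cons a s : (forall y z, subseq [:: y; z] s -> ~ y < a < z) ->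
  has213 (a :: s) <-> has213 s.
Proof.
move=> no_yz; split; last exact/has213_subseq/subseq_cons.
move=> [x [y [z []]]] /=; case: eqP => [-> sub_yz | _ sub_xyz] lt_xyz.
  by case: (no_yz y z sub_yz).
by exists x, y, z.
Qed.

Lemma has213_cat m B S : {in B, forall u, m < u} -> {in S, forall u, u < m} ->
  has213 (B ++ S) <-> has213 B \/ has213 S.
Proof.
move=> gt_B lt_S; split=> [[x [y [z [/subseq_cat_split [t1 [t2 [def_t sub1 sub2]]] lt_xyz]]]] |].
  have not_split : x \in B -> z \in S -> False by move=> /gt_B ? /lt_S ?; lia.
  case: t1 def_t sub1 => [|a [|b [|c [|? ?]]]] //= def_t sub1.
  - by right; exists x, y, z; rewrite def_t.
  - case: def_t sub1 => <- def_t; rewrite sub1seq => B_a; case: not_split => //.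
    by apply: (mem_subseq sub2); rewrite -def_t !inE eqxx orbT.
  - case: def_t sub1 => <- <- def_t /mem_subseq B_xy; case: not_split; first exact/B_xy/mem_head.
    by apply: (mem_subseq sub2); rewrite -def_t mem_head.
  - by case: def_t sub1 => <- <- <- _ sub1; left; exists x, y, z.
case=> /has213_subseq; apply; [exact: prefix_subseq | exact: suffix_subseq].
Qed.

Lemma has213_shift m s : has213 (map (addn m) s) <-> has213 s.
Proof.
split => [[x [y [z [/subseq_map_preim [[|a [|b [|c [|? ?]]]] //= [-> -> ->] sub] lt]]]] |
          [x [y [z [sub lt]]]]].
  by exists a, b, c; split => //; lia.
by exists (m + x), (m + y), (m + z); split; [exact: (map_subseq (addn m) sub) | lia].
Qed.

Lemma avoid213_split m r : m \notin r -> ~ has213 (m :: r) ->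
  r = [seq u <- r | m < u] ++ [seq u <- r | u < m].
Proof.
elim: r => [|a r IH] //; rewrite inE negb_or => /andP [ne_ma m_r] no213.
have /(IH m_r) def_r : ~ has213 (m :: r).
  apply: contra_not no213; apply: has213_subseq.
  exact: (@cat_subseq _ [:: m] _ [:: m] (a :: r) (subseq_refl _) (subseq_cons r a)).
rewrite /=; case: (ltngtP m a) => [lt_ma | lt_am | eq_ma] /=; last by rewrite eq_ma eqxx in ne_ma.
  by rewrite -def_r.
have lt_r u : u \in r -> u < m.
  move=> r_u; case: (ltngtP u m) => // [lt_mu | eq_um]; last by rewrite -eq_um r_u in m_r.
  case: no213; exists m, a, u; split; last by rewrite lt_am.
  by rewrite (@cat_subseq _ [:: m; a] [:: u] [:: m; a] r) ?sub1seq.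
rewrite (@eq_in_filter _ _ pred0) => [|u /lt_r lt_um /=]; last by rewrite ltnNge ltnW.
by rewrite filter_pred0 (@eq_in_filter _ _ predT) ?filter_predT // => u /lt_r.
Qed.

Lemma has213_cons0 s : has213 (0 :: s) <-> has213 s.
Proof. by apply: has213_cons => y z _; rewrite ltn0. Qed.

Lemma avoids_or p s s1 s2 : (contains p s <-> contains p s1 \/ contains p s2) ->
  avoids p s = avoids p s1 && avoids p s2.
Proof. by move=> eqv; rewrite /avoids -negb_or; congr negb; apply/idP/orP => /eqv. Qed.

Section Next.
Variable T : eqType.
Implicit Types (p q : seq T) (x : T).

Lemma next_cons_head a p : next (a :: p) a = head a p.
Proof. by case: p => [|b p] /=; rewrite eqxx. Qed.

Lemma next_catC p q : uniq (p ++ q) -> next (p ++ q) =1 next (q ++ p).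
Proof. by move=> Upq x; rewrite -(rot_size_cat p q) (next_rot _ Upq). Qed.

Lemma next_cat p q x : uniq (p ++ q) -> x \in p ->
  next (p ++ q) x = if x == last x p then head (head x p) q else next p x.
Proof.
case: p => // a p Upq p_x; have Up : uniq (a :: p) by move: Upq; rewrite cat_uniq => /and3P [].
rewrite !next_nth mem_cat p_x index_cat p_x; set i := index x (a :: p).
have lt_i : i < (size p).+1 by rewrite index_mem.
have -> : (x == last a p) = (i == size p).
  rewrite -[last a p]/(last a (a :: p)) -(nth_last a) -{1}(nth_index a p_x).
  by rewrite nth_uniq // index_mem.
rewrite /= nth_cat; case: (ltngtP i (size p)) lt_i => // [lt_pi | ->] lt_i; first lia.
by rewrite subnn nth0.
Qed.

Lemma next_last p x : uniq p -> x \in p -> x = last x p -> next p x = head x p.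
Proof. by move=> Up p_x x_last; rewrite -[p]cats0 next_cat ?cats0 // -x_last eqxx. Qed.

Lemma next_eq_head p x : uniq p -> x \in p -> (next p x == head x p) = (x == last x p).
Proof.
case: p => // a p Up p_x.
case: (x =P last x (a :: p)) => [/(next_last Up p_x) -> | ne_x_last]; first exact: eqxx.
apply/eqP => next_x; apply: ne_x_last; apply: (can_inj (prev_next Up)).
by rewrite next_x (next_last Up (mem_last a p)).
Qed.
End Next.

(* A cycle form lists {0, ..., n-1} starting at 0 and encodes the permutation
   [next c]. *)
Definition is_cycle_form n (c : seq nat) : bool := perm_eq c (iota 0 n) && (head 0 c == 0).

Definition one_line_of (c : seq nat) : seq nat := [seq next c i | i <- iota 0 (size c)].

Definition good_cycle_form k (c : seq nat) : bool :=
  avoids (delta k) (one_line_of c) && avoids pat213 c.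

Section CycleForm.
Variables (n : nat) (c : seq nat).
Hypothesis cf_c : is_cycle_form n c.

Lemma cycle_form_uniq : uniq c.
Proof. by case/andP: cf_c => /perm_uniq ->; rewrite iota_uniq. Qed.

Lemma mem_cycle_form x : (x \in c) = (x < n).
Proof. by case/andP: cf_c => /perm_mem ->; rewrite mem_iota. Qed.

Lemma size_cycle_form : size c = n.
Proof. by case/andP: cf_c => /perm_size ->; rewrite size_iota. Qed.

Lemma mem_one_line_of x : (x \in one_line_of c) = (x < n).
Proof.
rewrite /one_line_of size_cycle_form -mem_cycle_form.
apply/mapP/idP => [[y n_y ->] | c_x]; first by move: n_y; rewrite mem_next mem_cycle_form mem_iota.
exists (prev c x); last by rewrite next_prev // cycle_form_uniq.
by rewrite mem_iota -mem_cycle_form mem_prev.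
Qed.

Lemma next_cycle_form_lt x : x < n -> next c x < n.
Proof. by rewrite -!mem_cycle_form mem_next. Qed.
End CycleForm.

Lemma is_cycle_form_cons n B : 0 < n ->
  is_cycle_form n (0 :: B) <-> uniq B /\ forall y, (y \in B) = (0 < y < n).
Proof.
move=> n_gt0; split => [cf_B | [uB mem_B]].
  have /andP [B'0 uB] := cycle_form_uniq cf_B; split=> // y.
  case: (posnP y) => [-> | y_gt0]; first by rewrite (negbTE B'0).
  by rewrite -(mem_cycle_form cf_B) inE gtn_eqF.
rewrite /is_cycle_form eqxx andbT; apply: uniq_perm; rewrite ?iota_uniq //=.
  by rewrite mem_B ltnn uB.
by move=> y; rewrite inE mem_B mem_iota; lia.
Qed.

Lemma cycle_form_cons n c : 0 < n -> is_cycle_form n c -> c = 0 :: behead c.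
Proof.
move=> n_gt0 cf_c; have := size_cycle_form cf_c; case/andP: cf_c => _.
by case: c => [|a r] /= /eqP a0 sz_c; [lia | rewrite a0].
Qed.

Lemma cycle_form_cons2 n c : 1 < n -> is_cycle_form n c -> c = 0 :: nth 0 c 1 :: drop 2 c.
Proof.
move=> n_gt1 cf_c; have := size_cycle_form cf_c; case/andP: cf_c => _.
by case: c => [|a [|b r]] /= /eqP a0 sz_c; [lia | lia | rewrite a0 drop0].
Qed.

Lemma iota_shift m l : iota m l = map (addn m) (iota 0 l).
Proof. by rewrite -iotaDl addn0. Qed.

(* C(pi) = (0, m, m + B, S) from C(sigma) = (0, m, S) and C(tau) = (0, B). *)
Definition glue m (lo hi : seq nat) : seq nat := 0 :: map (addn m) hi ++ drop 2 lo.

Section Glue.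
Variables (m l : nat) (S B : seq nat).
Local Notation lo := (0 :: m :: S).
Local Notation hi := (0 :: B).
Local Notation c := (glue m lo hi).
Hypotheses (cf_lo : is_cycle_form m.+1 lo) (cf_hi : is_cycle_form l hi).

Lemma glueE : c = 0 :: map (addn m) hi ++ S.
Proof. by rewrite /glue /= drop0. Qed.

Let uniq_hi : uniq hi := cycle_form_uniq cf_hi.

Let l_gt0 : 0 < l.
Proof. by rewrite -(mem_cycle_form cf_hi) mem_head. Qed.

Let mem_B y : (y \in B) = (0 < y < l).
Proof. by have [_ ->] := (is_cycle_form_cons _ l_gt0).1 cf_hi. Qed.

Let m_gt0 : 0 < m.
Proof.
have [_ /(_ m)] := (is_cycle_form_cons _ (ltn0Sn m)).1 cf_lo.
by rewrite mem_head ltnSn andbT.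
Qed.

Let mem_S x : (x \in S) = (0 < x < m).
Proof.
have [/andP [m'S _] mem_mS] := (is_cycle_form_cons _ (ltn0Sn m)).1 cf_lo.
have := mem_mS x; rewrite inE; case: (eqVneq x m) => [-> _ | /negbTE ne_xm /= ->].
  by rewrite (negbTE m'S) ltnn andbF.
by rewrite ltnS (leq_eqVlt x) ne_xm.
Qed.

Lemma glue_is_cycle_form : is_cycle_form (m + l) c.
Proof.
rewrite /is_cycle_form glueE eqxx andbT iotaD add0n (iota_shift m l).
have perm_S : perm_eq (0 :: S) (iota 0 m).
  apply: uniq_perm; rewrite ?iota_uniq //.
    by have := cycle_form_uniq cf_lo; rewrite !cons_uniq => /and3P [_ _ uS]; rewrite /= mem_S uS.
  by move=> x; rewrite inE mem_S mem_iota; lia.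
rewrite -cat1s perm_catCA perm_catC.
by apply: perm_cat => //; apply: perm_map; case/andP: cf_hi.
Qed.

Let uniq_c : uniq (0 :: map (addn m) hi ++ S).
Proof. by rewrite -glueE (cycle_form_uniq glue_is_cycle_form). Qed.

Let uniq_lo : uniq lo := cycle_form_uniq cf_lo.

Lemma next_glue_low x : x < m -> next c x = next lo x.
Proof.
case: (posnP x) => [-> _ | x_gt0 lt_xm]; first by rewrite glueE !next_cons_head /= addn0.
have S_x : x \in S by rewrite mem_S x_gt0.
rewrite glueE (@next_catC _ (0 :: map (addn m) hi) S uniq_c) (@next_catC _ [:: 0; m] S uniq_lo).
by rewrite !next_cat // uniq_catC.
Qed.

Lemma next_glue_high y : y < l -> next c (m + y) = glue_shift m (next lo m) (next hi y).
Proof.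
move=> lt_yl; have hi_y : y \in hi by rewrite (mem_cycle_form cf_hi).
have next_lo_m : next lo m = head 0 S.
  by rewrite (@next_catC _ [:: 0] (m :: S) uniq_lo) cat_cons next_cons_head cats1 headI.
rewrite /glue_shift next_eq_head // glueE.
rewrite (@next_catC _ [:: 0] (map (addn m) hi ++ S) uniq_c) -catA next_cat ?map_f //; last first.
  by rewrite catA -(@uniq_catC _ [:: 0]).
rewrite last_map eqn_add2l next_lo_m cats1 headI; case: eqP => // _.
by rewrite (next_map (@addnI m)).
Qed.

Lemma one_line_glue : one_line_of c =
  map (next lo) (iota 0 m) ++ map (glue_shift m (next lo m)) (one_line_of hi).
Proof.
rewrite /one_line_of (size_cycle_form glue_is_cycle_form) (size_cycle_form cf_hi).
rewrite iotaD map_cat add0n (iota_shift m l) -!map_comp; congr (_ ++ _); apply/eq_in_map => x.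
  by rewrite mem_iota => /andP [_ lt_xm]; exact: next_glue_low.
by rewrite mem_iota => /andP [_ lt_xl]; exact: next_glue_high.
Qed.

Lemma one_line_lo : one_line_of lo = rcons (map (next lo) (iota 0 m)) (next lo m).
Proof. by rewrite /one_line_of (size_cycle_form cf_lo) -addn1 iotaD map_cat cats1. Qed.

Lemma avoids_delta_glue k : avoids (delta k) (one_line_of c) =
  avoids (delta k) (one_line_of lo) && avoids (delta k) (one_line_of hi).
Proof.
have le_next_lo x : x <= m -> next lo x <= m by exact: (next_cycle_form_lt cf_lo).
apply: avoids_or; rewrite !contains_deltaE one_line_glue one_line_lo.
apply: has_decreasing_glue; last by rewrite (mem_one_line_of cf_hi).
  by apply/allP => y /mapP [x]; rewrite mem_iota => /andP [_ lt_xm] ->; apply/le_next_lo/ltnW.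
exact: le_next_lo.
Qed.

Lemma avoids213_glue : avoids pat213 c = avoids pat213 lo && avoids pat213 hi.
Proof.
have lt_S u : u \in S -> u < m by rewrite mem_S => /andP [].
have gt_B u : u \in map (addn m) B -> m < u by case/mapP => y; rewrite mem_B => ? ->; lia.
have no_pivot y z : subseq [:: y; z] (map (addn m) B ++ S) -> ~ y < m < z.
  move=> /subseq_cat_split [[|a t1] [t2 [def_t sub1 sub2]]] lt_ymz.
    have t2_z : z \in t2 by rewrite -[t2]cat0s -def_t !inE eqxx orbT.
    by have := lt_S z (mem_subseq sub2 t2_z); lia.
  by case: def_t sub1 => <- _ /mem_subseq/(_ y (mem_head _ _))/gt_B; lia.
have no_pivot_S y z : subseq [:: y; z] S -> ~ y < m < z.
  by move=> /mem_subseq/(_ z); rewrite !inE eqxx orbT => /(_ isT)/lt_S; lia.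
apply: avoids_or; rewrite !contains213E glueE /= addn0 !has213_cons0.
rewrite (has213_cons no_pivot) (has213_cons no_pivot_S) (has213_cat gt_B lt_S) has213_shift.
exact: or_comm.
Qed.

Lemma good_glue k : good_cycle_form k c = good_cycle_form k lo && good_cycle_form k hi.
Proof. by rewrite /good_cycle_form avoids_delta_glue avoids213_glue andbACA. Qed.

End Glue.

Lemma glue_split n m r : 0 < m < n -> is_cycle_form n (0 :: m :: r) -> ~ has213 (m :: r) ->
  exists S B, [/\ is_cycle_form m.+1 (0 :: m :: S), is_cycle_form (n - m) (0 :: B)
                & 0 :: m :: r = glue m (0 :: m :: S) (0 :: B)].
Proof.
move=> /andP [m_gt0 lt_mn] cf_c no213.
have [/andP [m'r uniq_r] mem_mr] := (is_cycle_form_cons _ (ltn_trans m_gt0 lt_mn)).1 cf_c.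
have mem_r y : (y \in r) = (0 < y < n) && (y != m).
  by rewrite -mem_mr inE; case: eqP => [-> | _]; rewrite ?(negbTE m'r) ?andbT.
have def_r := avoid213_split m'r no213.
exists [seq u <- r | u < m], [seq u - m | u <- r & m < u]; split.
- apply/is_cycle_form_cons => //; split.
    by rewrite /= mem_filter ltnn filter_uniq.
  by move=> y; rewrite inE mem_filter mem_r; lia.
- apply/is_cycle_form_cons; first lia; split.
    rewrite map_inj_in_uniq ?filter_uniq // => u v.
    by rewrite !mem_filter => /andP [lt_mu _] /andP [lt_mv _]; lia.
  move=> y; apply/mapP/idP => [[u] | lt_y]; first by rewrite mem_filter mem_r; lia.
  by exists (y + m); rewrite ?mem_filter ?mem_r; lia.
- congr (_ :: _); rewrite /glue /= drop0 addn0 -map_comp {1}def_r; congr (_ :: _ ++ _).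
  rewrite -[LHS]map_id; apply/eq_in_map => u; rewrite mem_filter /=; lia.
Qed.

Lemma map_traject (T1 T2 : Type) (f1 : T1 -> T1) (f2 : T2 -> T2) (h : T1 -> T2) :
  (forall x, h (f1 x) = f2 (h x)) -> forall x n, map h (traject f1 x n) = traject f2 (h x) n.
Proof. by move=> hf x n; elim: n x => //= n IHn x; rewrite IHn hf. Qed.

Lemma fcycle_traject (T : eqType) (f : T -> T) x p :
  fcycle f (x :: p) -> x :: p = traject f x (size p).+1.
Proof.
move=> /fpathE; rewrite size_rcons trajectSr => /rcons_inj [def_p _].
by rewrite trajectS -def_p.
Qed.

Section CyclicPerm.
Variable n : nat.
Local Notation N := n.+1.
Implicit Type s : 'S_N.

Lemma cycle_formE s : cycle_form s = map val (traject s ord0 N).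
Proof. by []. Qed.

Lemma nth1_cycle_form s : nth 0 (cycle_form s) 1 = val (s ord0).
Proof. by case: n s => [|n'] s //=; case: (s ord0) => [[]]. Qed.

Lemma card_porbit_cyclic s x : cyclic_perm s -> #|porbit s x| = N.
Proof. by move=> /forallP /(_ x) /eqP. Qed.

Lemma cyclic_permP s : reflect (forall y, y \in porbit s ord0) (cyclic_perm s).
Proof.
have full_orbit : (forall y, y \in porbit s ord0) <-> porbit s ord0 = [set: 'I_N].
  by split => [full | -> y]; [apply/setP => y; rewrite inE full | rewrite inE].
apply: (iffP forallP) => [cyc | /full_orbit full x].
  by apply/full_orbit/eqP; rewrite eqEcard subsetT cardsT card_ord (eqP (cyc ord0)) leqnn.
have /eqP -> : porbit s x == porbit s ord0 by rewrite eq_porbit_mem full inE.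
by rewrite full cardsT card_ord.
Qed.

Lemma mem_traject_cyclic s x : cyclic_perm s -> x \in traject s ord0 N.
Proof.
move=> cyc_s; have := porbit_traject s ord0 x; rewrite (card_porbit_cyclic _ cyc_s) => <-.
exact/cyclic_permP.
Qed.

Lemma uniq_traject_cyclic s : cyclic_perm s -> uniq (traject s ord0 N).
Proof. by move=> cyc_s; have := uniq_traject_porbit s ord0; rewrite card_porbit_cyclic. Qed.

Lemma fcycle_traject_cyclic s : cyclic_perm s -> fcycle s (traject s ord0 N).
Proof.
move=> cyc_s; rewrite trajectS /= rcons_path fpath_traject last_traject /=.
by rewrite -iterS; have := iter_porbit s ord0; rewrite card_porbit_cyclic // => ->.
Qed.

Lemma next_cycle_form s x : cyclic_perm s -> next (cycle_form s) (val x) = val (s x).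
Proof.
move=> cyc_s; rewrite cycle_formE (next_map val_inj (uniq_traject_cyclic cyc_s)).
by rewrite (nextE (fcycle_traject_cyclic cyc_s)) ?mem_traject_cyclic.
Qed.

Lemma cycle_form_is_cycle_form s : cyclic_perm s -> is_cycle_form N (cycle_form s).
Proof.
move=> cyc_s; rewrite /is_cycle_form cycle_formE eqxx andbT.
apply: uniq_perm; rewrite ?iota_uniq ?(map_inj_uniq val_inj) ?uniq_traject_cyclic //.
move=> y; rewrite mem_iota; apply/mapP/idP => [[x _ ->] | /= lt_y]; first exact: ltn_ord.
by exists (Ordinal lt_y); rewrite ?mem_traject_cyclic.
Qed.

Lemma one_line_cycle_form s : cyclic_perm s -> one_line s = one_line_of (cycle_form s).
Proof.
move=> cyc_s; rewrite /one_line_of (size_cycle_form (cycle_form_is_cycle_form cyc_s)).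
by rewrite -val_enum_ord -map_comp; apply: eq_map => x; exact/esym/next_cycle_form.
Qed.

Lemma goodE k s : good k s = cyclic_perm s && good_cycle_form k (cycle_form s).
Proof.
by rewrite /good /good_cycle_form; case cyc_s: (cyclic_perm s); rewrite // one_line_cycle_form.
Qed.

Lemma cycle_form_inj s t : cyclic_perm s -> cyclic_perm t -> cycle_form s = cycle_form t -> s = t.
Proof.
move=> cyc_s cyc_t eq_st; apply/permP => x; apply: val_inj.
by rewrite -(next_cycle_form _ cyc_s) -(next_cycle_form _ cyc_t) eq_st.
Qed.

Lemma cycle_form_surj c : is_cycle_form N c -> exists2 s : 'S_N, cyclic_perm s & cycle_form s = c.
Proof.
move=> cf_c; have uniq_c := cycle_form_uniq cf_c.
pose f (x : 'I_N) : 'I_N := inord (next c x).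
have val_f x : val (f x) = next c x by apply/inordK/(next_cycle_form_lt cf_c).
have inj_f : injective f.
  by move=> x y /(congr1 val); rewrite !val_f => /(can_inj (prev_next uniq_c))/val_inj.
pose s := perm inj_f; have val_s x : val (s x) = next c x by rewrite permE val_f.
have cf_s : cycle_form s = c.
  have def_c := cycle_form_cons (ltn0Sn n) cf_c.
  have fcycle_c : fcycle (next c) (0 :: behead c) by rewrite -def_c; exact: cycle_next.
  rewrite cycle_formE (map_traject val_s) [RHS]def_c (fcycle_traject fcycle_c).
  by rewrite size_behead (size_cycle_form cf_c).
exists s => //; apply/cyclic_permP => y.
have : val y \in c by rewrite (mem_cycle_form cf_c) ltn_ord.
rewrite -cf_s cycle_formE mem_map; last exact: val_inj.
by case/trajectP => i _ ->; rewrite -permX mem_porbit.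
Qed.

End CyclicPerm.

Definition cycle_forms n k (R : pred (seq nat)) : seq (seq nat) :=
  [seq cycle_form s | s in [set s : 'S_n | good k s && R (cycle_form s)]].

Lemma uniq_cycle_forms n k R : 0 < n -> uniq (cycle_forms n k R).
Proof.
case: n => // n _; rewrite map_inj_in_uniq ?enum_uniq // => s t.
rewrite !mem_enum !inE !goodE => /andP [/andP [cyc_s _] _] /andP [/andP [cyc_t _] _].
exact: cycle_form_inj.
Qed.

Lemma mem_cycle_forms n k R c : 0 < n ->
  (c \in cycle_forms n k R) = [&& is_cycle_form n c, good_cycle_form k c & R c].
Proof.
case: n => // n _; apply/imageP/and3P => [[s] | [cf_c good_c R_c]].
  rewrite inE goodE => /andP [/andP [cyc_s good_s] R_s] ->.
  by split => //; exact: cycle_form_is_cycle_form.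
have [s cyc_s def_c] := cycle_form_surj cf_c.
by exists s; rewrite // inE goodE cyc_s def_c good_c R_c.
Qed.

Lemma glue_inj m lo hi lo' hi' : size hi = size hi' ->
  lo = 0 :: m :: drop 2 lo -> lo' = 0 :: m :: drop 2 lo' ->
  glue m lo hi = glue m lo' hi' -> lo = lo' /\ hi = hi'.
Proof.
move=> sz_hi def_lo def_lo' [] /eqP.
rewrite eqseq_cat ?size_map // => /andP [/eqP eq_hi /eqP eq_S].
by split; [rewrite def_lo def_lo' eq_S | exact: (inj_map (@addnI m))].
Qed.

Definition second_is m (c : seq nat) : bool := nth 0 c 1 == m.

Section GlueCount.
Variables (n k m : nat).
Hypothesis lt_0mn : 0 < m < n.

Local Notation Forms := (cycle_forms n k (second_is m)).
Local Notation LoForms := (cycle_forms m.+1 k (second_is m)).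
Local Notation HiForms := (cycle_forms (n - m) k predT).

Let m_gt0 : 0 < m. Proof. by case/andP: lt_0mn. Qed.
Let lt_mn : m < n. Proof. by case/andP: lt_0mn. Qed.
Let n_gt0 : 0 < n. Proof. exact: ltn_trans m_gt0 lt_mn. Qed.
Let nm_gt0 : 0 < n - m. Proof. by rewrite subn_gt0. Qed.

Lemma mem_glue_cycle_forms c : (c \in Forms) = (c \in allpairs (glue m) LoForms HiForms).
Proof.
rewrite mem_cycle_forms //; apply/and3P/allpairsP => [[cf_c good_c /eqP c1] | [[lo hi] /=]].
  have def_c := cycle_form_cons2 (leq_ltn_trans m_gt0 lt_mn) cf_c; rewrite c1 in def_c.
  have no213 : ~ has213 (m :: drop 2 c).
    move/(has213_subseq (subseq_cons _ 0)); rewrite -def_c -contains213E.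
    by apply/negP; case/andP: good_c.
  have cf_c' : is_cycle_form n (0 :: m :: drop 2 c) by rewrite -def_c.
  have [S [B [cf_lo cf_hi def_c']]] := glue_split lt_0mn cf_c' no213.
  have := good_c; rewrite def_c def_c' (good_glue cf_lo cf_hi) => /andP [good_lo good_hi].
  exists (0 :: m :: S, 0 :: B).
  by rewrite !mem_cycle_forms //= cf_lo cf_hi good_lo good_hi /second_is /= eqxx.
rewrite !mem_cycle_forms // => -[/and3P [cf_lo good_lo /eqP lo1] /and3P [cf_hi good_hi _] ->].
have def_lo := cycle_form_cons2 (m_gt0 : 1 < m.+1) cf_lo; rewrite lo1 in def_lo.
have def_hi := cycle_form_cons nm_gt0 cf_hi.
rewrite def_lo def_hi in cf_lo cf_hi good_lo good_hi *.
split; first by rewrite -(subnKC (ltnW lt_mn)) (glue_is_cycle_form cf_lo cf_hi).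
  by rewrite (good_glue cf_lo cf_hi) good_lo good_hi.
by rewrite /second_is /= addn0.
Qed.

Lemma perm_glue_cycle_forms : perm_eq Forms (allpairs (glue m) LoForms HiForms).
Proof.
have shape_lo lo : lo \in LoForms -> lo = 0 :: m :: drop 2 lo.
  rewrite mem_cycle_forms // => /and3P [cf_lo _ /eqP lo1].
  by rewrite [LHS](cycle_form_cons2 (m_gt0 : 1 < m.+1) cf_lo) lo1.
have size_hi hi : hi \in HiForms -> size hi = n - m.
  by rewrite mem_cycle_forms // => /and3P [/size_cycle_form].
apply: uniq_perm; [exact: uniq_cycle_forms | | exact: mem_glue_cycle_forms].
apply: allpairs_uniq; rewrite ?uniq_cycle_forms // => p p'.
move=> /allpairsP [[lo hi] [/= lo_in hi_in ->]] /allpairsP [[lo' hi'] [/= lo_in' hi_in' ->]] /=.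
move=> /(glue_inj _ (shape_lo _ lo_in) (shape_lo _ lo_in')).
by rewrite !size_hi // => /(_ erefl) [-> ->].
Qed.
End GlueCount.

Lemma size_cycle_forms_second n k m : size (cycle_forms n.+1 k (second_is m)) =
  #|[set s : 'S_n.+1 | good k s && (val (s ord0) == m)]|.
Proof. by rewrite size_image; apply: eq_card => s; rewrite !inE /second_is nth1_cycle_form. Qed.

Lemma size_cycle_forms_all n k : size (cycle_forms n k predT) = a_nk n k.
Proof. by rewrite size_image; apply: eq_card => s; rewrite !inE andbT. Qed.

Lemma card_good_first_value n k m : 0 < m < n.+1 ->
  #|[set s : 'S_n.+1 | good k s && (val (s ord0) == m)]| = b_nk m.+1 k * a_nk (n.+1 - m) k.
Proof.
move=> lt_0mn; rewrite -size_cycle_forms_second (perm_size (perm_glue_cycle_forms k lt_0mn)).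
by rewrite size_allpairs size_cycle_forms_second size_cycle_forms_all.
Qed.

Lemma card_partition_val (T : finType) n (P : pred T) (f : T -> 'I_n) :
  #|[set x | P x]| = \sum_(j < n) #|[set x | P x && (val (f x) == j)]|.
Proof.
rewrite -sum1_card (partition_big f predT) //=; apply: eq_bigr => j _.
by rewrite -sum1_card; apply: eq_bigl => x; rewrite !inE.
Qed.

Lemma good_fixfree n k (s : 'S_n.+2) : good k s -> forall x, s x != x.
Proof.
rewrite goodE => /andP [cyc_s _] x; apply/eqP => fix_x.
by have := uniq_traject_porbit s x; rewrite (card_porbit_cyclic x cyc_s) /= fix_x mem_head.
Qed.

Theorem lemma2p2 (n k : nat) : 2 <= n -> 3 <= k ->
  a_nk n k = \sum_(2 <= j < n.+1) b_nk j k * a_nk (n.+1 - j) k.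
Proof.
case: n => [|[|n]] // _ _.
pose F j := #|[set s : 'S_n.+2 | good k s && (val (s ord0) == j)]|.
rewrite /a_nk (card_partition_val _ (fun s : 'S_n.+2 => s ord0)) -(big_mkord xpredT F) big_ltn //.
have -> : F 0 = 0.
  apply: eq_card0 => s; rewrite !inE; apply/andP => -[/good_fixfree/(_ ord0) fixfree /eqP s0].
  by move: fixfree; rewrite (_ : s ord0 = ord0) ?eqxx //; exact: val_inj.
rewrite add0n [RHS]big_add1 /=; apply: eq_big_nat => j /andP [j_gt0 lt_j].
by rewrite /F card_good_first_value ?j_gt0 // subSS.
Qed.
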